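(* Let $M\in\mathbb N$ and let $X(M)$ be the subshift defined below. For $n\ge1$, the number $p_n(X(M))$ of $n$-periodic points of $X(M)$ is $$(2M+1)^n+(M+2)^n-\sum_{i=0}^{n/2}\binom{n}{i}2^i\left(M^i+M^{n-i}\right)+\binom{n}{n/2}(2M)^{n/2}\quad\text{if } n \text{ is even},$$ $$(2M+1)^n+(M+2)^n-\sum_{i=0}^{(n-1)/2}\binom{n}{i}2^i\left(M^i+M^{n-i}\right)\quad\text{if } n \text{ is odd}.$$
   Context: Let $\Sigma_1=\{\lambda,\xi,\rho_1,\dots,\rho_M,\eta_1,\dots,\eta_M\}$. $\mathcal M_1(M)$ is the monoid with zero generated by $\Sigma_1$ and an identity $\mathbf 1$, subject only to the relations $\lambda\rho_i=\mathbf 1$, $\lambda\eta_i=0$, $\xi\eta_i=\mathbf 1$, $\xi\rho_i=0$ ($1\le i\le M$), $\mathbf 1$ is the identity and $0$ is absorbing; no other relations. $\mathit{red}:\Sigma_1^*\to\mathcal M_1(M)$ sends a word to the product of its letters (empty word to $\mathbf 1$). $X(M)=\{x\in\Sigma_1^{\mathbb Z}:\mathit{red}(x_i\cdots x_j)\neq 0\ \forall i\le j\}$ with shift $\sigma$, and $p_n(X(M))=\#\{x\in X(M):\sigma^nx=x\}$. *)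

From mathcomp Require Import all_boot all_order all_algebra.
Set Implicit Arguments. Unset Strict Implicit. Unset Printing Implicit Defensive.
Import Order.TTheory GRing.Theory Num.Theory.

(* The alphabet Sigma_1 = {lambda, xi, rho_1..rho_M, eta_1..eta_M};
   indices i in 1..M are represented by 'I_M (i.e. 0..M-1). *)
Inductive Sigma1 (M : nat) : Type :=
| Lam : Sigma1 M
| Xi  : Sigma1 M
| Rho : 'I_M -> Sigma1 M
| Eta : 'I_M -> Sigma1 M.

Arguments Lam {M}. Arguments Xi {M}.

(* Elements of the free monoid with zero on Sigma1: Some w for a word w,
   None for the zero 0. *)
Definition fmz (M : nat) := option (seq (Sigma1 M)).

Inductive rel_step (M : nat) : fmz M -> fmz M -> Prop :=
| st_lam_rho u v (i : 'I_M) :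
    rel_step (Some (u ++ [:: Lam; Rho i] ++ v)) (Some (u ++ v))
| st_lam_eta u v (i : 'I_M) :
    rel_step (Some (u ++ [:: Lam; Eta i] ++ v)) None
| st_xi_eta u v (i : 'I_M) :
    rel_step (Some (u ++ [:: Xi; Eta i] ++ v)) (Some (u ++ v))
| st_xi_rho u v (i : 'I_M) :
    rel_step (Some (u ++ [:: Xi; Rho i] ++ v)) None.

(* M_1(M) is the quotient by this congruence. *)
Inductive mcong (M : nat) : fmz M -> fmz M -> Prop :=
| mc_step a b : rel_step a b -> mcong a b
| mc_refl a : mcong a a
| mc_sym a b : mcong a b -> mcong b a
| mc_trans a b c : mcong a b -> mcong b c -> mcong a c.

Definition red_nonzero (M : nat) (w : seq (Sigma1 M)) : Prop :=
  ~ mcong (Some w) None.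

Definition bisq (M : nat) := int -> Sigma1 M.

Definition subword (M : nat) (x : bisq M) (i : int) (k : nat) : seq (Sigma1 M) :=
  [seq x (i + (j%:Z))%R | j <- iota 0 k.+1].

Definition inX (M : nat) (x : bisq M) : Prop :=
  forall (i : int) (k : nat), red_nonzero (subword x i k).

Definition shift (M : nat) (x : bisq M) : bisq M := fun i => x (i + 1)%R.

Definition periodic_pt (M : nat) (n : nat) (x : bisq M) : Prop :=
  iter n (@shift M) x = x.

Definition card_periodic_is (M n N : nat) : Prop :=
  exists f : 'I_N -> bisq M,
    injective f /\
    (forall k, inX (f k) /\ periodic_pt n (f k)) /\
    (forall x, inX x -> periodic_pt n x -> exists k, f k = x).

From HB Require Import structures.
From mathcomp Require Import all_boot all_order all_algebra.
From mathcomp Require Import zify ring.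
From Stdlib Require Import FunctionalExtensionality.
Set Implicit Arguments. Unset Strict Implicit. Unset Printing Implicit Defensive.
Import Order.TTheory GRing.Theory Num.Theory.

(* Call lambda, xi opening and rho_i, eta_i closing letters.  A word is nonzero
   in M_1(M) iff pushing opening letters on a stack and popping them against
   closing letters never pairs lambda with eta_i or xi with rho_i; its normal
   form is then closing letters followed by opening letters.  An n-periodic
   point is the periodic extension of a word w of length n, and it lies in X(M)
   iff ww is nonzero, because then every power of w is nonzero.  Cancelling a
   cyclically adjacent opening/closing pair (2M matching choices) shortens w by
   two, so the admissible words with a opening and c closing letters number
   2^a M^c if c <= a and (2M)^c otherwise.  Summing over the positions of the
   opening letters and comparing with the binomial expansions of (M+2)^n and
   (2M+1)^n gives the formula. *)

Definition sigma1_code M (x : Sigma1 M) : bool + ('I_M + 'I_M) :=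
  match x with
  | Lam => inl true | Xi => inl false | Rho i => inr (inl i) | Eta i => inr (inr i)
  end.

Definition sigma1_decode M (y : bool + ('I_M + 'I_M)) : Sigma1 M :=
  match y with
  | inl true => Lam | inl false => Xi | inr (inl i) => Rho i | inr (inr i) => Eta i
  end.

Lemma sigma1_codeK M : cancel (@sigma1_code M) (@sigma1_decode M).
Proof. by case. Qed.

HB.instance Definition _ M := Equality.copy (Sigma1 M) (can_type (@sigma1_codeK M)).

Section Reduction.

Variable M : nat.
Local Notation letter := (Sigma1 M).

Definition is_open (l : letter) := match l with Lam | Xi => true | _ => false end.

Definition matches (o c : letter) :=
  match o, c with Lam, Rho _ | Xi, Eta _ => true | _, _ => false end.

(* A nonzero element of M_1(M) has a unique normal form c_1..c_k o_1..o_m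
   with closing letters c_j followed by opening letters o_j.  A state stores
   the c_j and the stack of the o_j, top first, with lambda encoded by true;
   None stands for 0. *)
Definition nf_state := option (seq letter * seq bool).

Definition nf_step (s : nf_state) (l : letter) : nf_state :=
  if s is Some (cs, os) then
    match l, os with
    | Lam, _ => Some (cs, true :: os)
    | Xi, _ => Some (cs, false :: os)
    | _, [::] => Some (rcons cs l, [::])
    | Rho _, b :: os' => if b then Some (cs, os') else None
    | Eta _, b :: os' => if b then None else Some (cs, os')
    end
  else None.

Definition nf_run (s : nf_state) (w : seq letter) := foldl nf_step s w.

Definition nf (w : seq letter) := nf_run (Some ([::], [::])) w.

Lemma nf_run_None w : nf_run None w = None.
Proof. by elim: w. Qed.

Lemma nf_run_cat s u v : nf_run s (u ++ v) = nf_run (nf_run s u) v.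
Proof. exact: foldl_cat. Qed.

Lemma nf_cancel u o c v : is_open o -> ~~ is_open c ->
  nf (u ++ o :: c :: v) = if matches o c then nf (u ++ v) else None.
Proof.
move=> ho hc; rewrite /nf !nf_run_cat /=.
have -> : nf_step (nf_step (nf_run (Some ([::], [::])) u) o) c
          = if matches o c then nf_run (Some ([::], [::])) u else None.
  by case: nf_run => [[cs os]|]; case: o ho => //; case: c hc => //; case: matches.
by case: matches; rewrite ?nf_run_None.
Qed.

Definition open_letter (b : bool) : letter := if b then Lam else Xi.

Definition nf_val (s : nf_state) : fmz M :=
  if s is Some (cs, os) then Some (cs ++ rev (map open_letter os)) else None.

Definition fmz_rcons (a : fmz M) (l : letter) : fmz M :=
  if a is Some w then Some (rcons w l) else None.

Lemma mcong_rcons a b l : mcong a b -> mcong (fmz_rcons a l) (fmz_rcons b l).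
Proof.
elim=> {a b} [a b|a|a b _ h|a b c _ h1 _ h2].
- by case=> u v i; apply: mc_step; rewrite /= !rcons_cat; constructor.
- exact: mc_refl.
- exact: mc_sym.
- exact: mc_trans h2.
Qed.

Lemma mcong_nf w : mcong (Some w) (nf_val (nf w)).
Proof.
elim/last_ind: w => [|w l IH]; first exact: mc_refl.
apply: (mc_trans (mcong_rcons l IH)); rewrite /nf -cats1 nf_run_cat.
case: nf_run => [[cs os]|] /=; last exact: mc_refl.
case: l => [||i|i] /=; try by rewrite rev_cons rcons_cat; apply: mc_refl.
all: case: os => [|[] os] /=; first by rewrite !cats0; apply: mc_refl.
all: set X := cs ++ rev (map open_letter os).
all: have -> : forall o c, rcons (cs ++ rev (o :: map open_letter os)) c = X ++ [:: o; c]
       by move=> o c; rewrite /X rev_cons -!cats1 -!catA.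
all: apply: mc_step.
- by have := st_lam_rho X [::] i; rewrite !cats0.
- exact: st_xi_rho X [::] i.
- exact: st_lam_eta X [::] i.
- by have := st_xi_eta X [::] i; rewrite !cats0.
Qed.

Definition nfz (a : fmz M) : nf_state := if a is Some w then nf w else None.

Lemma mcong_nfz a b : mcong a b -> nfz a = nfz b.
Proof.
elim=> {a b} [a b []|//|a b _ -> //|a b c _ -> _ -> //] u v i /=.
all: by rewrite nf_cancel.
Qed.

Lemma red_nonzeroP w : reflect (red_nonzero w) (nf w != None).
Proof.
apply: (iffP idP) => [/eqP hw /mcong_nfz //|hw].
apply/eqP => E; apply: hw; apply: (mc_trans (mcong_nf w)); rewrite E; exact: mc_refl.
Qed.

Lemma nf_run_None_stack w cs os cs' os' :
  nf_run (Some (cs, os)) w = None -> nf_run (Some (cs', os ++ os')) w = None.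
Proof.
elim: w cs os cs' os' => [|l w IH] cs os cs' os' //=.
case: l => [||i|i] /=; try exact: IH.
all: case: os => [|[] os] /=; try exact: IH; try by rewrite nf_run_None.
all: case: os' => [|[] os'] /=; try by rewrite nf_run_None.
all: exact: IH _ [::] _ _.
Qed.

Lemma nf_infix p x s : nf (p ++ x ++ s) != None -> nf x != None.
Proof.
apply: contra => /eqP nx; rewrite /nf !nf_run_cat.
case: (nf_run _ p) => [[cs os]|]; last by rewrite !nf_run_None.
by rewrite (nf_run_None_stack cs os nx) nf_run_None.
Qed.

Lemma nf_cons_closed c x : ~~ is_open c -> (nf (c :: x) == None) = (nf x == None).
Proof.
by case: c => // i _; rewrite /nf /=; apply/eqP/eqP => /(nf_run_None_stack _ [::]); apply.
Qed.

Lemma nf_rcons_open x o : is_open o -> (nf (rcons x o) == None) = (nf x == None).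
Proof. by rewrite /nf -cats1 nf_run_cat; case: (nf_run _ x) => [[cs os]|]; case: o. Qed.

Lemma nf_run_all_open s w : all is_open w -> nf_run (Some s) w != None.
Proof. by elim: w s => [|[||i|i] w IH] [cs os] //= /IH. Qed.

Lemma nf_run_all_closed cs w :
  all (predC is_open) w -> nf_run (Some (cs, [::])) w != None.
Proof. by elim: w cs => [|[||i|i] w IH] cs //= /IH. Qed.

Definition admissible (w : seq letter) := nf (w ++ w) != None.

Lemma admissible_cancel u o c v : is_open o -> ~~ is_open c ->
  admissible (u ++ o :: c :: v) = matches o c && admissible (u ++ v).
Proof.
move=> ho hc; rewrite /admissible -catA /= nf_cancel //.
case hoc: (matches o c) => //=.
by rewrite catA (catA _ u) nf_cancel // hoc -!catA.
Qed.

Lemma admissible_wrap c m o : is_open o -> ~~ is_open c ->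
  admissible (c :: rcons m o) = matches o c && admissible m.
Proof.
move=> ho hc; rewrite /admissible cat_cons cat_rcons -cat_cons nf_cancel //.
case: matches => //=.
by rewrite nf_cons_closed // -rcons_cat nf_rcons_open.
Qed.

Fixpoint wpow (K : nat) (w : seq letter) := if K is K'.+1 then w ++ wpow K' w else [::].

Lemma wpowSr K w : wpow K.+1 w = wpow K w ++ w.
Proof.
elim: K => [|K IH]; first by rewrite /= cats0.
by rewrite -[wpow K.+2 w]/(w ++ wpow K.+1 w) {1}IH catA.
Qed.

Lemma wpow_rot K u v : wpow K.+1 (u ++ v) = u ++ wpow K (v ++ u) ++ v.
Proof.
elim: K => [|K IH]; first by rewrite /= !cats0.
by rewrite -[wpow K.+2 _]/((u ++ v) ++ wpow K.+1 (u ++ v)) IH /= !catA.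
Qed.

Lemma all_wpow (P : pred letter) K w : all P w -> all P (wpow K w).
Proof. by move=> hw; elim: K => //= K IH; rewrite all_cat hw. Qed.

Lemma nf_wpow_cancel p u o c v s K : is_open o -> ~~ is_open c -> matches o c ->
  nf (p ++ wpow K (u ++ o :: c :: v) ++ s) = nf (p ++ wpow K (u ++ v) ++ s).
Proof.
move=> ho hc hoc; elim: K p => [|K IH] p //=.
by rewrite -!catA /= catA nf_cancel // hoc catA IH -!catA.
Qed.

Lemma nf_wpow_wrap K c m o : is_open o -> ~~ is_open c -> matches o c ->
  (nf (wpow K.+1 (c :: rcons m o)) == None) = (nf (wpow K.+1 m) == None).
Proof.
move=> ho hc hoc; rewrite -cats1 -cat1s wpow_rot cat1s nf_cons_closed //.
rewrite catA cats1 nf_rcons_open // -catA.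
have := nf_wpow_cancel [::] m [::] m K ho hc hoc; rewrite /= cats0 => ->.
by rewrite -wpowSr.
Qed.

Lemma word_split (w : seq letter) :
  (exists u o c v, [/\ w = u ++ o :: c :: v, is_open o & ~~ is_open c]) \/
  (exists cs os, [/\ w = cs ++ os, all (predC is_open) cs & all is_open os]).
Proof.
elim: w => [|l w [[u [o [c [v [-> ho hc]]]]] | [cs [os [-> hcs hos]]]]].
- by right; exists [::], [::].
- by left; exists (l :: u), o, c, v.
case hl: (is_open l); last by right; exists (l :: cs), os; rewrite /= hl.
case: cs hcs => [|c cs] /=; first by right; exists [::], (l :: os); rewrite /= hl.
by case/andP=> hc _; left; exists [::], l, c, (cs ++ os).
Qed.

Lemma admissible_wpow w K : admissible w -> nf (wpow K w) != None.
Proof.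
have [N] := ubnP (size w); elim: N w K => // N IHN w K.
case: (word_split w) => [[u [o [c [v [-> ho hc]]]]] | [cs [os [-> hcs hos]]]].
  rewrite size_cat /= admissible_cancel // => hs /andP [hoc hw].
  have := nf_wpow_cancel [::] u v [::] K ho hc hoc; rewrite /= !cats0 => ->.
  by apply: IHN hw; rewrite size_cat; lia.
case: cs hcs => [|c cs] hcs.
  by move=> _ _; apply: nf_run_all_open; apply: all_wpow.
case/lastP: os hos => [|os o] hos.
  by move=> _ _; rewrite cats0; apply: nf_run_all_closed; apply: all_wpow.
have ho : is_open o by move: hos; rewrite all_rcons => /andP [].
have hc : ~~ is_open c by case/andP: hcs.
rewrite cat_cons -rcons_cat /= size_rcons admissible_wrap // => hs /andP [hoc hw].
case: K => [//|K]; rewrite nf_wpow_wrap //.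
by apply: IHN hw; lia.
Qed.

Lemma size_wpow K (w : seq letter) : size (wpow K w) = K * size w.
Proof. by elim: K => //= K IH; rewrite size_cat IH mulSn. Qed.

Lemma nth_wpow K (w : seq letter) m :
  m < K * size w -> nth Lam (wpow K w) m = nth Lam w (m %% size w).
Proof.
elim: K m => [|K IH] m //= hm; rewrite nth_cat.
case: ltnP => h; first by rewrite modn_small.
rewrite IH; last by move: hm; rewrite mulSn; lia.
by rewrite -{2}(subnK h) modnDr.
Qed.

End Reduction.

Definition weight M a c := if c <= a then 2 ^ a * M ^ c else (2 * M) ^ c.

Lemma weightSS M a c : weight M a.+1 c.+1 = 2 * M * weight M a c.
Proof. by rewrite /weight ltnS; case: ifP => _; rewrite !expnS; ring. Qed.

(* In a shape, true marks the position of an opening letter. *)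
Fixpoint shapes n : seq (seq bool) :=
  if n is n'.+1 then [seq b :: s | b <- [:: true; false], s <- shapes n'] else [:: [::]].

Lemma big_shapesS n (G : seq bool -> nat) :
  \sum_(s <- shapes n.+1) G s = \sum_(s <- shapes n) G (true :: s) + \sum_(s <- shapes n) G (false :: s).
Proof. by rewrite big_allpairs_dep /= big_cons big_seq1. Qed.

Lemma big_shapes n (G : nat -> nat -> nat) :
  \sum_(s <- shapes n) G (count id s) (count negb s) = \sum_(k < n.+1) 'C(n, k) * G k (n - k).
Proof.
elim: n G => [|n IH] G; first by rewrite /= big_seq1 big_ord_recl big_ord0 bin0 mul1n addn0.
rewrite big_shapesS (IH (fun a c => G a.+1 c)) (IH (fun a c => G a c.+1)).
rewrite [RHS]big_ord_recl /= bin0 mul1n subn0.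
under [X in _ = _ + X]eq_bigr => i _ do
  rewrite /bump /= add1n binS mulnDl addnC subSS.
rewrite big_split /= addnCA; congr (_ + _).
rewrite big_ord_recl /= bin0 subn0 mul1n; congr (_ + _).
rewrite [RHS]big_ord_recr /= bin_small // mul0n addn0.
by apply: eq_bigr => i _; rewrite /bump /= add1n subnSK.
Qed.

Section Counting.

Variable M : nat.
Local Notation letter := (Sigma1 M).
Local Notation is_open := (@is_open M).

Definition opens : seq letter := [:: Lam; Xi].

Definition closes : seq letter := [seq Rho i | i <- enum 'I_M] ++ [seq Eta i | i <- enum 'I_M].

Definition letters_of (b : bool) := if b then opens else closes.

Fixpoint words_of_shape (s : seq bool) : seq (seq letter) :=
  if s is b :: s' then [seq l :: w | l <- letters_of b, w <- words_of_shape s'] else [:: [::]].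

Fixpoint words n : seq (seq letter) :=
  if n is n'.+1 then [seq l :: w | l <- opens ++ closes, w <- words n'] else [:: [::]].

Lemma letters_of_open b l : l \in letters_of b -> is_open l = b.
Proof.
case: b => /=; first by rewrite !inE => /orP [] /eqP ->.
by rewrite mem_cat => /orP [] /mapP [i _ ->].
Qed.

Lemma shape_of_words s w : w \in words_of_shape s -> map is_open w = s.
Proof.
elim: s w => [|b s IH] w /=; first by rewrite inE => /eqP ->.
by case/allpairsP => [[l v] /= [hl hv ->]] /=; rewrite (letters_of_open hl) (IH _ hv).
Qed.

Lemma mem_closes c : c \in closes = ~~ is_open c.
Proof.
rewrite mem_cat; case: c => [||i|i] /=; last 2 first.
- by rewrite map_f ?mem_enum.
- by rewrite map_f ?mem_enum ?orbT.
all: by apply/norP; split; apply/mapP => [[i _]].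
Qed.

Lemma size_closes : size closes = 2 * M.
Proof. by rewrite size_cat !size_map -enumT size_enum_ord addnn mul2n. Qed.

Lemma uniq_closes : uniq closes.
Proof.
rewrite cat_uniq !map_inj_uniq; try by move=> a b [].
rewrite -enumT enum_uniq andbT /=.
by apply/hasPn => _ /mapP [i _ ->]; apply/mapP => [[j _]].
Qed.

Lemma mem_words n w : (w \in words n) = (size w == n).
Proof.
elim: n w => [|n IH] [|l w] //.
  by apply/allpairsP => [[[l' v] /= [_ _]]].
apply/allpairsP/idP => [[[l' v] /= [_ hv [_ ->]]] | /=]; first by rewrite eqSS -IH.
rewrite eqSS -IH => hw; exists (l, w); split => //=.
by rewrite !inE mem_closes; case: l => // *; rewrite orbT.
Qed.

Lemma uniq_words n : uniq (words n).
Proof.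
elim: n => // n IH; apply: allpairs_uniq => //; last by move=> [? ?] [? ?] _ _ [-> ->].
rewrite cat_uniq uniq_closes andbT /=; apply/hasPn => l.
by rewrite mem_closes; case: l.
Qed.

Lemma big_words_of_shape_cons b s (F : seq letter -> nat) :
  \sum_(w <- words_of_shape (b :: s)) F w
  = \sum_(l <- letters_of b) \sum_(w <- words_of_shape s) F (l :: w).
Proof. exact: big_allpairs_dep. Qed.

Lemma big_words_of_shape_cat s1 s2 (F : seq letter -> nat) :
  \sum_(w <- words_of_shape (s1 ++ s2)) F w
  = \sum_(u <- words_of_shape s1) \sum_(v <- words_of_shape s2) F (u ++ v).
Proof.
elim: s1 F => [|b s1 IH] F /=; first by rewrite big_seq1.
by rewrite !big_words_of_shape_cons; apply: eq_bigr => l _; rewrite IH.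
Qed.

Lemma big_words n (F : seq letter -> nat) :
  \sum_(w <- words n) F w = \sum_(s <- shapes n) \sum_(w <- words_of_shape s) F w.
Proof.
elim: n F => [|n IH] F; first by rewrite /= !big_seq1.
rewrite big_shapesS -[words n.+1]/[seq l :: w | l <- opens ++ closes, w <- words n].
rewrite big_allpairs_dep big_cat [LHS]/=.
congr (_ + _); symmetry; under eq_bigr do rewrite big_words_of_shape_cons.
all: by rewrite exchange_big; apply: eq_bigr => l _; rewrite IH.
Qed.

Lemma shape_split (s : seq bool) :
  (exists s1 s2, s = s1 ++ true :: false :: s2) \/
  (exists c a, s = nseq c false ++ nseq a true).
Proof.
elim: s => [|[] s [[s1 [s2 ->]] | [[|c] [a ->]]]].
- by right; exists 0, 0.
- by left; exists (true :: s1), s2.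
- by right; exists 0, a.+1.
- by left; exists [::], (nseq c false ++ nseq a true).
- by left; exists (false :: s1), s2.
- by right; exists 1, a.
- by right; exists c.+2, a.
Qed.

Lemma big_matching (F : letter -> letter -> nat) S :
  {in opens & closes, forall o c, F o c = matches o c * S} ->
  \sum_(o <- opens) \sum_(c <- closes) F o c = 2 * M * S.
Proof.
move=> hF; under eq_big_seq => o ho do under eq_big_seq => c hc do rewrite hF //.
rewrite !big_cons big_nil !big_cat !big_map -enumT !big_enum /= !sum_nat_const card_ord.
ring.
Qed.

Lemma is_open_opens o : o \in opens -> is_open o.
Proof. by move/(letters_of_open (b := true)). Qed.

Lemma big_admissible_cancel s1 s2 :
  \sum_(w <- words_of_shape (s1 ++ true :: false :: s2)) admissible w
  = 2 * M * \sum_(w <- words_of_shape (s1 ++ s2)) admissible w.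
Proof.
rewrite !big_words_of_shape_cat big_distrr; apply: eq_bigr => u _.
rewrite big_words_of_shape_cons; under eq_bigr do rewrite big_words_of_shape_cons.
apply: big_matching => o c /is_open_opens ho; rewrite mem_closes => hc.
by rewrite big_distrr; apply: eq_bigr => v _; rewrite admissible_cancel //= mulnb.
Qed.

Lemma big_admissible_wrap m :
  \sum_(w <- words_of_shape (false :: rcons m true)) admissible w
  = 2 * M * \sum_(w <- words_of_shape m) admissible w.
Proof.
rewrite big_words_of_shape_cons.
under eq_bigr do rewrite -cats1 big_words_of_shape_cat.
under eq_bigr do under eq_bigr do rewrite big_words_of_shape_cons.
under eq_bigr do rewrite exchange_big.
rewrite exchange_big; apply: big_matching => o c /is_open_opens ho; rewrite mem_closes => hc.
by rewrite big_distrr; apply: eq_bigr => v _; rewrite big_seq1 cats1 admissible_wrap //= mulnb.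
Qed.

Lemma size_words_of_nseq k b : size (words_of_shape (nseq k b)) = size (letters_of b) ^ k.
Proof. by elim: k => //= k IH; rewrite size_allpairs IH expnS. Qed.

Lemma admissible_words_of_nseq k b w : w \in words_of_shape (nseq k b) -> admissible w.
Proof.
move/shape_of_words => hw.
have : all (pred1 b) (map is_open w) by rewrite hw all_nseq /= eqxx orbT.
rewrite all_map /admissible; case: b {hw} => hb.
- by rewrite nf_run_all_open // all_cat andbb; apply: sub_all hb => l /eqP.
- by rewrite nf_run_all_closed // all_cat andbb; apply: sub_all hb => l /eqP /negbT.
Qed.

Lemma big_admissible_nseq k b :
  \sum_(w <- words_of_shape (nseq k b)) admissible w = size (letters_of b) ^ k.
Proof.
rewrite -size_words_of_nseq -sum1_size.
by apply: eq_big_seq => w /admissible_words_of_nseq ->.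
Qed.

Lemma big_admissible_shape s :
  \sum_(w <- words_of_shape s) admissible w = weight M (count id s) (count negb s).
Proof.
have [N] := ubnP (size s); elim: N s => // N IHN s.
case: (shape_split s) => [[s1 [s2 ->]] | [c [a ->]]].
  rewrite size_cat /= => hs; rewrite big_admissible_cancel IHN; last by rewrite size_cat; lia.
  by rewrite !count_cat /= -weightSS; congr (weight M); lia.
rewrite !count_cat !count_nseq /= !mul0n !mul1n add0n addn0.
case: c => [|c] hs; first by rewrite big_admissible_nseq /weight leq0n muln1.
case: a hs => [|a] hs; first by rewrite cats0 big_admissible_nseq /weight /= size_closes.
have -> : nseq c.+1 false ++ nseq a.+1 true = false :: rcons (nseq c false ++ nseq a true) true.
  by rewrite /= rcons_cat; congr (_ :: _ ++ _); elim: a {hs} => //= a <-.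
rewrite big_admissible_wrap IHN; last by move: hs; rewrite !size_cat !size_nseq; lia.
by rewrite !count_cat !count_nseq /= !mul0n !mul1n add0n addn0 -weightSS.
Qed.

End Counting.

Section PeriodicPoints.

Variable M : nat.
Local Notation letter := (Sigma1 M).

Definition periodic_ext (n : nat) (w : seq letter) : bisq M :=
  fun i => nth Lam w `|(i %% n%:Z)%Z|.

Lemma iter_shift m (x : bisq M) i : iter m (@shift M) x i = x (i + m)%R.
Proof. by elim: m i => [|m IH] i /=; rewrite ?addr0 // /shift IH; congr x; lia. Qed.

Lemma periodic_ext_nat n w (j : nat) : periodic_ext n w j = nth Lam w (j %% n).
Proof. by rewrite /periodic_ext modz_nat. Qed.

Lemma periodic_ext_periodic n w : periodic_pt n (periodic_ext n w).
Proof. by apply: functional_extensionality => i; rewrite iter_shift /periodic_ext addrC modzDl. Qed.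

Lemma periodic_ptE n (x : bisq M) : 0 < n -> periodic_pt n x ->
  x = periodic_ext n (mkseq (fun j => x j) n).
Proof.
move=> n_gt0 /(congr1 (fun y => y _)) hx; apply: functional_extensionality => i.
have hper (m : nat) (j : int) : x (j + (m * n)%:Z)%R = x j.
  elim: m j => [|m IH] j; first by rewrite addr0.
  by rewrite mulSn PoszD addrA IH -(iter_shift n x) hx.
have n0 : (n%:Z != 0)%R by rewrite eqz_nat -lt0n.
have r_ge0 := modz_ge0 i n0; have r_lt := ltz_pmod i (n_gt0 : (0 < n%:Z)%R).
rewrite /periodic_ext nth_mkseq; last by lia.
rewrite gez0_abs // {1}(divz_eq i n) addrC; case: (i %/ n)%Z => m /=.
  by rewrite -PoszM hper.
by rewrite -[LHS](hper m.+1) NegzE PoszM; congr x; ring.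
Qed.

Lemma subword_periodic_ext0 n w : size w = n -> 0 < n ->
  subword (periodic_ext n w) 0 (n + n).-1 = w ++ w.
Proof.
move=> hs hn; apply: (@eq_from_nth _ Lam); first by rewrite size_map size_iota size_cat hs; lia.
move=> j; rewrite size_map size_iota => hj.
rewrite (nth_map 0) ?size_iota // nth_iota // add0r add0n periodic_ext_nat nth_cat hs.
case: ltnP => h; first by rewrite modn_small.
by rewrite -{1}(subnK h) modnDr modn_small //; lia.
Qed.

Lemma subword_periodic_ext_infix n w i k : size w = n -> 0 < n ->
  exists p s, p ++ subword (periodic_ext n w) i k ++ s = wpow (`|(i %% n%:Z)%Z| + k.+1) w.
Proof.
move=> hs hn; set r := `|(i %% n%:Z)%Z|; set W := wpow (r + k.+1) w.
have hW : size W = (r + k.+1) * n by rewrite size_wpow hs.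
exists (take r W), (drop k.+1 (drop r W)).
suff -> : subword (periodic_ext n w) i k = take k.+1 (drop r W) by rewrite !cat_take_drop.
apply: (@eq_from_nth _ Lam).
  by rewrite size_map size_iota size_take size_drop hW; case: ltnP => //; nia.
move=> j; rewrite size_map size_iota => hj.
rewrite (nth_map 0) ?size_iota // nth_iota // add0n nth_take // nth_drop.
rewrite nth_wpow hs; last by nia.
have hr : (i %% n%:Z)%Z = r by rewrite /r gez0_abs // modz_ge0 // eqz_nat -lt0n.
by rewrite /periodic_ext -modzDml hr -PoszD modz_nat.
Qed.

Lemma inX_periodic_ext n w : size w = n -> 0 < n ->
  inX (periodic_ext n w) <-> admissible w.
Proof.
move=> hs hn; split => [hX | hw i k].
  by have /red_nonzeroP := hX 0%R (n + n).-1; rewrite subword_periodic_ext0.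
have [p [s E]] := subword_periodic_ext_infix i k hs hn.
by apply/red_nonzeroP; apply: (@nf_infix _ p _ s); rewrite E admissible_wpow.
Qed.

Lemma periodic_ext_inj n u v : size u = n -> size v = n ->
  periodic_ext n u = periodic_ext n v -> u = v.
Proof.
move=> hu hv E; apply: (@eq_from_nth _ Lam); first by rewrite hu hv.
move=> j; rewrite hu => hj.
by have := congr1 (fun f => f (Posz j)) E; rewrite /= !periodic_ext_nat modn_small.
Qed.

End PeriodicPoints.

Lemma big_ord_half n (F : nat -> nat) :
  \sum_(0 <= i < (n./2).+1) F i = \sum_(k < n.+1) (k <= n - k) * F k.
Proof.
rewrite big_mkord (big_ord_widen n.+1 F); last by lia.
by rewrite big_mkcond; apply: eq_bigr => k _; rewrite mulnbl ltnS; congr (if _ then _ else _); lia.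
Qed.

Lemma big_middle n (F : nat -> nat) :
  \sum_(k < n.+1) (k == n - k :> nat) * F k = if odd n then 0 else F n./2.
Proof.
rewrite (eq_bigr (fun k : 'I_n.+1 => if k == n./2 :> nat then ~~ odd n * F k else 0)).
  rewrite -big_mkcond (big_ord1_eq _ (fun j => ~~ odd n * F j)) ltnS (_ : n./2 <= n) //; last by lia.
  by case: odd; rewrite ?mul0n ?mul1n.
move=> k _; have kn := ltn_ord k.
have -> : (k == n - k :> nat) = ~~ odd n && (k == n./2 :> nat) by lia.
by case: eqP; rewrite ?andbT ?andbF.
Qed.

Lemma weight_complement M n k :
  weight M k (n - k) + (k <= n - k) * (2 ^ k * M ^ (n - k)) + (n - k <= k) * (2 * M) ^ (n - k)
  = 2 ^ k * M ^ (n - k) + (2 * M) ^ (n - k) + (k == n - k) * (2 * M) ^ k.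
Proof.
by rewrite /weight; case: ltngtP => [_|_|->] /=; rewrite ?expnMn ?mul0n ?mul1n; ring.
Qed.

Lemma binomial_weight_identity M n :
  \sum_(k < n.+1) 'C(n, k) * weight M k (n - k)
  + \sum_(0 <= i < (n./2).+1) 'C(n, i) * 2 ^ i * (M ^ i + M ^ (n - i))
  = (2 * M + 1) ^ n + (M + 2) ^ n + (if odd n then 0 else 'C(n, n./2) * (2 * M) ^ n./2).
Proof.
rewrite big_ord_half -(big_middle n (fun k => 'C(n, k) * (2 * M) ^ k)) !expnDn.
(* Split off the M^i part of the second sum and reindex it by i |-> n - i. *)
rewrite [X in _ + X = _](eq_bigr (fun k : 'I_n.+1 => (k <= n - k) * ('C(n, k) * 2 ^ k * M ^ (n - k))
                                     + (k <= n - k) * ('C(n, k) * 2 ^ k * M ^ k))); last first.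
  by move=> k _; ring.
rewrite big_split /= [X in _ + (_ + X) = _](reindex_inj rev_ord_inj) -!big_split /=.
apply: eq_bigr => k _; have kn : k <= n by rewrite -ltnS.
rewrite subSS subKn // bin_sub // exp1n.
transitivity ('C(n, k) * (weight M k (n - k) + (k <= n - k) * (2 ^ k * M ^ (n - k))
                          + (n - k <= k) * (2 * M) ^ (n - k))); first by rewrite expnMn; ring.
by rewrite weight_complement !expnMn; ring.
Qed.

Lemma count_admissible_words M n :
  count (@admissible M) (words M n) = \sum_(k < n.+1) 'C(n, k) * weight M k (n - k).
Proof.
rewrite -sumn_count sumnE big_map big_words.
by under eq_bigr do rewrite big_admissible_shape; rewrite big_shapes.
Qed.

Lemma card_periodic_admissible M n : 0 < n ->
  card_periodic_is M n (count (@admissible M) (words M n)).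
Proof.
move=> hn; set A := filter (@admissible M) (words M n); rewrite -size_filter -/A.
have uA : uniq A by rewrite filter_uniq ?uniq_words.
have memA w : (w \in A) = admissible w && (size w == n) by rewrite mem_filter mem_words.
have sizeA (k : 'I_(size A)) : size (nth [::] A k) = n.
  by have := mem_nth [::] (ltn_ord k); rewrite memA => /andP [_ /eqP].
exists (fun k => periodic_ext n (nth [::] A k)); split; [|split].
- move=> k1 k2 /(periodic_ext_inj (sizeA k1) (sizeA k2)) /eqP.
  by rewrite nth_uniq // => /eqP /val_inj.
- move=> k; split; last exact: periodic_ext_periodic.
  have := mem_nth [::] (ltn_ord k); rewrite memA => /andP [hw _].
  exact/(inX_periodic_ext (sizeA k) hn).
- move=> x hx hp; set w := mkseq (fun j => x j) n.
  have hs : size w = n by rewrite size_mkseq.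
  have xE : x = periodic_ext n w := periodic_ptE hn hp.
  have hw : w \in A.
    by rewrite memA hs eqxx andbT; apply/(inX_periodic_ext hs hn); rewrite -xE.
  have hi : index w A < size A by rewrite index_mem.
  by exists (Ordinal hi); rewrite /= nth_index.
Qed.

Local Open Scope ring_scope.

Lemma PoszX (a k : nat) : a%:Z ^+ k = (a ^ k)%:Z.
Proof. by rewrite -natz -natrX natz. Qed.

Theorem proposition3p3 (M n : nat) (hn : (1 <= n)%N) :
  exists N : nat,
    card_periodic_is M n N /\
    (N%:Z =
      (2 * M + 1)%:Z ^+ n + (M + 2)%:Z ^+ n
      - \sum_(0 <= i < (n./2).+1) ('C(n, i) * 2 ^ i)%:Z * (M%:Z ^+ i + M%:Z ^+ (n - i))
      + (if odd n then 0 else ('C(n, n./2))%:Z * (2 * M)%:Z ^+ (n./2))).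
Proof.
exists (count (@admissible M) (words M n)); split; first exact: card_periodic_admissible.
have H := congr1 Posz (binomial_weight_identity M n).
rewrite -count_admissible_words !PoszD in H.
rewrite !PoszX; set S := (\sum_(0 <= i < _) _)%N in H.
have -> : \sum_(0 <= i < (n./2).+1) ('C(n, i) * 2 ^ i)%:Z * (M%:Z ^+ i + M%:Z ^+ (n - i)) = S%:Z.
  by rewrite /S -[in RHS]natz natr_sum; apply: eq_bigr => i _; rewrite natz !PoszX !PoszM !PoszD.
by case: odd H; rewrite -?PoszM; lia.
Qed.
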